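(* Let $p_0>0$ and $r>1$, and run the multiplicative price update algorithm on truthful input (true types $(v_i,\mathcal S_i)$) in a fixed order $i=1,\dots,n$, obtaining $S=(S_1,\dots,S_n)$. For each good $e$ let $\ell_e^*=|\{i: e\in S_i\}|$ and $p_e^*=p_0 r^{\ell_e^*}$, and let $v(S)=\sum_{i=1}^n v_i(S_i)$. Then $$v(S)\ge \frac{1}{r-1}\Big(\sum_{e\in\mathsf U}p_e^*-m p_0\Big)\qquad\text{and}\qquad v(S)\ge \mathrm{OPT}-b\sum_{e\in\mathsf U}p_e^*,$$ where $\mathrm{OPT}$ is the maximum of $\sum_i v_i(T_i)$ over all allocations $(T_1,\dots,T_n)$ in which every good belongs to at most $b$ of the sets $T_i$.
   Context: Multi-unit combinatorial auction: a set $\mathsf U$ of $m$ goods, each available in $b\ge1$ copies; $n$ bidders, bidder $i$ having a collection $\mathcal S_i$ of $k$ nonempty subsets of $\mathsf U$ and valuation $v_i:\mathcal S_i\to\mathbb R_{\ge0}$, extended to all $T\subseteq\mathsf U$ by $v_i(T)=\max\{v_i(S'):S'\in\mathcal S_i, S'\subseteq T\}$ ($0$ if none). Multiplicative price update algorithm (parameters $p_0,r$): set $p_e^1=p_0$ for all goods $e$; for $i=1,\dots,n$: let $S_i$ be a set maximizing $v_i(S)$ among $S\in\mathcal S_i$ with $v_i(S)\ge\sum_{e\in S}p_e^i$ ($S_i=\emptyset$ if there is none); set $p_e^{i+1}=r\,p_e^i$ for $e\in S_i$ and $p_e^{i+1}=p_e^i$ otherwise; output $(S_1,\dots,S_n)$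 (which need not respect the supply $b$). *)

From HB Require Import structures.
From mathcomp Require Import all_boot all_order all_algebra.
Set Implicit Arguments. Unset Strict Implicit. Unset Printing Implicit Defensive.
Import Order.TTheory GRing.Theory Num.Theory.
Local Open Scope ring_scope.

(* Goods: a finite type U (m = #|U|); bidders: 'I_n.
   Bidder i has a collection C i : {set {set U}} of nonempty bundles and a
   valuation v i : {set U} -> R (only its values on C i matter). *)

Definition vext (R : realFieldType) (U : finType) (C : {set {set U}})
    (v : {set U} -> R) (T : {set U}) : R :=
  \big[Num.max/0]_(S' in C | S' \subset T) v S'.

Definition load_before (U : finType) (n : nat) (S : 'I_n -> {set U})
    (i : 'I_n) (e : U) : nat :=
  #|[set j : 'I_n | (j < i)%N && (e \in S j)]|.

Definition price (R : realFieldType) (U : finType) (n : nat)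
    (p0 r : R) (S : 'I_n -> {set U}) (i : 'I_n) (e : U) : R :=
  p0 * r ^+ load_before S i e.

Definition load (U : finType) (n : nat) (S : 'I_n -> {set U}) (e : U) : nat :=
  #|[set i : 'I_n | e \in S i]|.

(* S is a possible output of the multiplicative price update algorithm
   (any tie-breaking among maximizers). *)
Definition mpu_run (R : realFieldType) (U : finType) (n : nat) (p0 r : R)
    (C : 'I_n -> {set {set U}}) (v : 'I_n -> {set U} -> R)
    (S : 'I_n -> {set U}) : Prop :=
  forall i : 'I_n,
    [/\ S i \in C i,
        \sum_(e in S i) price p0 r S i e <= v i (S i)
      & forall S', S' \in C i ->
          \sum_(e in S') price p0 r S i e <= v i S' -> v i S' <= v i (S i)]
    \/
    (S i = set0 /\
     forall S', S' \in C i -> v i S' < \sum_(e in S') price p0 r S i e).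

Definition feasible (U : finType) (n b : nat) (T : 'I_n -> {set U}) : Prop :=
  forall e : U, (#|[set i : 'I_n | e \in T i]| <= b)%N.

From HB Require Import structures.
From mathcomp Require Import all_boot all_order all_algebra.
Set Implicit Arguments. Unset Strict Implicit. Unset Printing Implicit Defensive.
Import Order.TTheory GRing.Theory Num.Theory.
Local Open Scope ring_scope.

(* When bidder i buys S_i, every good e of S_i has its price
   raised from p_e^i to r p_e^i, an increase of (r - 1) p_e^i.  Summed over the
   bidders containing e these increases telescope to p_e^* - p0, so
   sum_e p_e^* - m p0 = (r - 1) * (total payment), and each bidder pays at most
   its value for S_i (it only takes affordable bundles).

   Prices only rise, so a bundle S' of bidder i that is
   unaffordable at time i has value below its final price; an affordable one is
   worth at most v_i(S_i).  Hence v_i(T_i) <= v_i(S_i) + sum_{e in T_i} p_e^*,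
   and summing over a supply-b allocation T counts each p_e^* at most b times. *)

Section ExtendedValuation.
Variables (R : realFieldType) (U : finType).
Variables (C : {set {set U}}) (v : {set U} -> R).

Lemma vext_ge0 (T : {set U}) : 0 <= vext C v T.
Proof. by rewrite /vext; elim/big_rec: _ => // S' x _ hx; rewrite le_max hx orbT. Qed.

Lemma vext_ge (T S' : {set U}) : S' \in C -> S' \subset T -> v S' <= vext C v T.
Proof. by move=> hC hT; rewrite /vext (bigD1 S') ?hC ?hT //= le_max lexx. Qed.

Lemma vext_le (T : {set U}) (X : R) :
  0 <= X -> (forall S', S' \in C -> S' \subset T -> v S' <= X) -> vext C v T <= X.
Proof.
move=> hX hbound; rewrite /vext.
by elim/big_rec: _ => // S' x /andP[hC hT] hx; rewrite ge_max hx hbound.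
Qed.

End ExtendedValuation.

Section GeometricIncrements.
Variables (n : nat) (P : pred 'I_n).

Definition prefix_count (m : nat) : nat := #|[set j : 'I_n | (j < m)%N && P j]|.

Lemma prefix_countS (i : 'I_n) : prefix_count i.+1 = (prefix_count i + P i)%N.
Proof.
rewrite /prefix_count (cardsD1 i) inE ltnSn addnC; congr (_ + _)%N.
apply: eq_card => j; rewrite !inE ltnS leq_eqVlt -val_eqE /=.
by case: (nat_of_ord j =P i) => [/val_inj ->|_]; rewrite ?eqxx ?ltnn.
Qed.

(* If each index satisfying P multiplies a quantity by r, the increments
   (r - 1) r^(count so far) telescope to r^(total count) - 1. *)
Lemma sum_geometric_increments (R : comPzRingType) (r : R) :
  \sum_(i : 'I_n | P i) (r - 1) * r ^+ prefix_count i = r ^+ #|[set j | P j]| - 1.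
Proof.
have step (i : 'I_n) : (if P i then (r - 1) * r ^+ prefix_count i else 0) =
    r ^+ prefix_count i.+1 - r ^+ prefix_count i.
  rewrite prefix_countS; case: (P i); first by rewrite addn1 exprS mulrBl mul1r.
  by rewrite addn0 subrr.
rewrite big_mkcond (eq_bigr _ (fun i _ => step i)) /=.
rewrite -(big_mkord xpredT (fun i => r ^+ prefix_count i.+1 - r ^+ prefix_count i)).
rewrite telescope_sumr // /prefix_count.
have -> : [set j : 'I_n | (j < 0)%N && P j] = set0 by apply/setP => j; rewrite !inE.
rewrite cards0 expr0; congr (r ^+ _ - 1).
by apply: eq_card => j; rewrite !inE ltn_ord.
Qed.

End GeometricIncrements.

Section Prices.
Variables (R : realFieldType) (U : finType) (n : nat) (p0 r : R).
Variable S : 'I_n -> {set U}.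

Definition final_price (e : U) : R := p0 * r ^+ load S e.

Lemma revenue_identity :
  \sum_(e : U) final_price e - #|U|%:R * p0 =
  (r - 1) * \sum_(i < n) \sum_(e in S i) price p0 r S i e.
Proof.
rewrite mulr_natl -sumr_const -sumrB mulr_sumr.
under [in RHS]eq_bigr => i _ do rewrite mulr_sumr big_mkcond /=.
rewrite exchange_big /=; apply: eq_bigr => e _.
rewrite /final_price -[X in _ - X]mulr1 -mulrBr.
rewrite -(@sum_geometric_increments n (fun i => e \in S i)) mulr_sumr big_mkcond /=.
apply: eq_bigr => i _; case: (e \in S i); rewrite ?mulr0 //.
by rewrite /price mulrCA.
Qed.

Hypotheses (p0_ge0 : 0 <= p0) (r_ge1 : 1 <= r).

Lemma final_price_ge0 (e : U) : 0 <= final_price e.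
Proof. by rewrite mulr_ge0 // exprn_ge0 // (le_trans ler01). Qed.

Lemma price_le_final (i : 'I_n) (e : U) : price p0 r S i e <= final_price e.
Proof.
rewrite /price /final_price ler_wpM2l // ler_weXn2l //.
by apply: subset_leq_card; apply/subsetP => j; rewrite !inE => /andP[_ ->].
Qed.

End Prices.

Section Run.
Variables (R : realFieldType) (U : finType) (n : nat) (p0 r : R).
Variables (C : 'I_n -> {set {set U}}) (v : 'I_n -> {set U} -> R).
Variable S : 'I_n -> {set U}.
Hypothesis run : mpu_run p0 r C v S.

Lemma payment_le_value (i : 'I_n) :
  \sum_(e in S i) price p0 r S i e <= vext (C i) (v i) (S i).
Proof.
case: (run i) => [[hC hpay _]|[-> _]]; last by rewrite big_set0 vext_ge0.
exact: le_trans hpay (vext_ge (v i) hC (subxx _)).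
Qed.

Hypotheses (p0_ge0 : 0 <= p0) (r_ge1 : 1 <= r).

Lemma value_le_received_plus_price (i : 'I_n) (T : {set U}) :
  vext (C i) (v i) T <= vext (C i) (v i) (S i) + \sum_(e in T) final_price p0 r S e.
Proof.
have price_ge0 : 0 <= \sum_(e in T) final_price p0 r S e.
  by apply: sumr_ge0 => e _; exact: final_price_ge0.
apply: vext_le => [|S' hS' hsub]; first by rewrite addr_ge0 ?vext_ge0.
have price_S'_le : \sum_(e in S') price p0 r S i e <= \sum_(e in T) final_price p0 r S e.
  rewrite [X in X <= _]big_mkcond [X in _ <= X]big_mkcond /=.
  apply: ler_sum => e _; case: ifP => he; first by rewrite (subsetP hsub _ he) price_le_final.
  by case: ifP => // _; exact: final_price_ge0.
(* An affordable bundle is dominated by the chosen one; an unaffordable one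
   is worth less than its price at time i, hence less than its final price. *)
have [hafford | hunaff] := leP (\sum_(e in S') price p0 r S i e) (v i S').
- case: (run i) => [[hC _ hmax]|[_ hall]]; last by have := hall _ hS'; rewrite ltNge hafford.
  apply: le_trans (hmax _ hS' hafford) _.
  by apply: le_trans (vext_ge (v i) hC (subxx _)) _; rewrite lerDl.
- apply: le_trans (ltW hunaff) _; apply: le_trans price_S'_le _.
  by rewrite lerDr vext_ge0.
Qed.

End Run.

Lemma feasible_weight_le (R : realFieldType) (U : finType) (n b : nat)
    (T : 'I_n -> {set U}) (w : U -> R) :
  feasible b T -> (forall e, 0 <= w e) ->
  \sum_(i < n) \sum_(e in T i) w e <= b%:R * \sum_(e : U) w e.
Proof.
move=> hT w_ge0.
under eq_bigr => i _ do rewrite big_mkcond /=.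
rewrite exchange_big /= mulr_sumr; apply: ler_sum => e _.
rewrite -big_mkcond /= (eq_bigl (fun i => i \in [set i : 'I_n | e \in T i])); last by move=> i; rewrite inE.
by rewrite sumr_const mulr_natl; apply: ler_wpMn2l; last exact: hT.
Qed.

Theorem lemma2 (R : realFieldType) (U : finType) (n k b : nat)
    (C : 'I_n -> {set {set U}}) (v : 'I_n -> {set U} -> R)
    (p0 r : R) (S : 'I_n -> {set U}) :
  (0 < b)%N ->
  (forall i, #|C i| = k) ->
  (forall i, forall S', S' \in C i -> S' != set0) ->
  (forall i, forall S', S' \in C i -> 0 <= v i S') ->
  0 < p0 -> 1 < r ->
  mpu_run p0 r C v S ->
  let vS := \sum_(i < n) vext (C i) (v i) (S i) in
  let pstar := fun e : U => p0 * r ^+ load S e in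
  vS >= (r - 1)^-1 * (\sum_(e : U) pstar e - #|U|%:R * p0) /\
  (forall T : 'I_n -> {set U}, feasible b T ->
     vS >= \sum_(i < n) vext (C i) (v i) (T i) - b%:R * \sum_(e : U) pstar e).
Proof.
move=> _ _ _ _ p0_gt0 r_gt1 run vS pstar.
have p0_ge0 := ltW p0_gt0; have r_ge1 := ltW r_gt1.
split.
- rewrite (revenue_identity p0 r S) mulrA mulVf ?mul1r ?subr_eq0 ?gt_eqF //.
  by apply: ler_sum => i _; exact: payment_le_value.
- move=> T hT; rewrite lerBlDr.
  apply: le_trans (ler_sum _ (fun i _ => value_le_received_plus_price run p0_ge0 r_ge1 i (T i))) _.
  rewrite big_split /= lerD2l.
  exact: feasible_weight_le hT (final_price_ge0 S p0_ge0 r_ge1).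
Qed.
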